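(* $z_2(4,4)\ge 10$.
   Context: Double Zarankiewicz number: consider configurations $G=([m],[n],E_1\cup E_2)$ where $[m]=\{1,\dots,m\}$, $E_1\subseteq[m]\times[n]$ is a set of 1-edges (cells) and $E_2$ is a set of 2-edges $(i,j;k,l)$ with $i,k\in[m]$, $j,l\in[n]$, $i\ne k$, $j\ne l$; the cells $(i,j)$ and $(k,l)$ are the two halves of this 2-edge. Simplicity condition: the halves of all 2-edges are pairwise distinct cells and none of them belongs to $E_1$. A cell is occupied if it lies in $E_1$ or is a half of some 2-edge. $G$ contains a generalized $C_4$-cycle if (1) there are four 1-edges $(i,j),(i,l),(k,j),(k,l)\in E_1$ with $i\ne k$, $j\ne l$; or (2) there is a 2-edge $(i,j;k,l)\in E_2$ whose two opposite cells $(i,l)$ and $(k,j)$ are both occupied; or (3) there are a 2-edge $(i,j;p,q)\in E_2$ and a cell $(k,l)$ such that the five cells $(k,l),(k,j),(k,q),(i,l),(p,l)$ are pairwise distinct and all occupied. $z_2(m,n)$ is the maximum of $|E_1|+|E_2|$ over all such $G$ satisfying the simplicity condition and containing no generalized $C_4$-cycle. *)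

From mathcomp Require Import all_boot.
Set Implicit Arguments. Unset Strict Implicit. Unset Printing Implicit Defensive.

Definition cell (m n : nat) := ('I_m * 'I_n)%type.
(* A 2-edge (i,j;k,l) is represented as the ordered pair of its halves
   ((i,j),(k,l)). *)
Definition tedge (m n : nat) := (cell m n * cell m n)%type.

Section Config.
Variables (m n : nat) (E1 : {set cell m n}) (E2 : {set tedge m n}).

Definition two_edges_ok : bool :=
  [forall e in E2, (e.1.1 != e.2.1) && (e.1.2 != e.2.2)].

Definition half (e : tedge m n) (x : cell m n) : bool := (e.1 == x) || (e.2 == x).

(* Simplicity: the halves of all 2-edges are pairwise distinct cells
   (distinct 2-edges share no half; within a 2-edge the halves differ,
   which follows from two_edges_ok) and no half lies in E1. *)
Definition simple_config : bool :=
  two_edges_ok &&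
  [forall e in E2, forall f in E2, forall x, (half e x && half f x) ==> (e == f)] &&
  [forall e in E2, (e.1 \notin E1) && (e.2 \notin E1)].

Definition occupied (x : cell m n) : bool :=
  (x \in E1) || [exists e in E2, half e x].

Definition cycle1 : bool :=
  [exists i : 'I_m, exists k : 'I_m, exists j : 'I_n, exists l : 'I_n,
    [&& i != k, j != l, (i, j) \in E1, (i, l) \in E1, (k, j) \in E1 & (k, l) \in E1]].

Definition cycle2 : bool :=
  [exists e in E2, occupied (e.1.1, e.2.2) && occupied (e.2.1, e.1.2)].

Definition cycle3 : bool :=
  [exists e in E2, exists c : cell m n,
    let: ((i, j), (p, q)) := e in
    let: (k, l) := c in
    let s := [:: (k, l); (k, j); (k, q); (i, l); (p, l)] in
    uniq s && all occupied s].

Definition has_gen_C4 : bool := [|| cycle1, cycle2 | cycle3].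

Definition admissible : bool := simple_config && ~~ has_gen_C4.

End Config.

Definition z2 (m n : nat) : nat :=
  \max_(E1 : {set cell m n})
    \max_(E2 : {set tedge m n} | admissible E1 E2) (#|E1| + #|E2|).

From mathcomp Require Import all_boot zmodp.
From Stdlib Require Import FunctionalExtensionality.

Set Implicit Arguments.
Unset Strict Implicit.
Unset Printing Implicit Defensive.

(* The bound is witnessed by a single admissible configuration on the 4 x 4
   grid with eight 1-edges and two 2-edges.  Admissibility is a finite check,
   made executable by replacing quantification over a finite type with
   quantification over an explicit list enumerating it. *)

Lemma leq_z2 m n (E1 : {set cell m n}) (E2 : {set tedge m n}) :
  admissible E1 E2 -> #|E1| + #|E2| <= z2 m n.
Proof.
move=> adm; apply: leq_trans (leq_bigmax E1).
exact: (@leq_bigmax_cond _ (admissible E1) (fun E2 => #|E1| + #|E2|) E2 adm).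
Qed.

Lemma mem_set_seq (T : finType) (s : seq T) : mem [set:: s] = mem s.
Proof.
rewrite /mem /=; congr Mem; apply: functional_extensionality => x.
exact: (in_set (fun y => y \in s) x).
Qed.

Lemma pred0b_seqE (T : finType) (s : seq T) :
  (forall x, x \in s) -> @pred0b T = fun P => ~~ has P s.
Proof.
move=> sT; apply: functional_extensionality => P.
by apply/pred0P/hasPn => [P0 x _ | nP x]; [rewrite P0 | apply/negbTE/nP].
Qed.

(* [enum 'I_n] does not reduce, as it is built with [insub] on an opaque
   proof; [inZp] gives ordinals that do. *)
Definition ord_seq n : seq 'I_n.+1 := [seq inZp k | k <- iota 0 n.+1].

Lemma mem_ord_seq n (i : 'I_n.+1) : i \in ord_seq n.
Proof.
apply/mapP; exists (val i); first by rewrite mem_iota ltn_ord.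
by apply/val_inj; rewrite /= modn_small.
Qed.

Definition cell_seq m n : seq (cell m.+1 n.+1) :=
  [seq (i, j) | i <- ord_seq m, j <- ord_seq n].

Lemma mem_cell_seq m n (c : cell m.+1 n.+1) : c \in cell_seq m n.
Proof. by case: c => i j; apply: allpairs_f; apply: mem_ord_seq. Qed.

Definition tedge_seq m n : seq (tedge m.+1 n.+1) :=
  [seq (c, d) | c <- cell_seq m n, d <- cell_seq m n].

Lemma mem_tedge_seq m n (e : tedge m.+1 n.+1) : e \in tedge_seq m n.
Proof. by case: e => c d; apply: allpairs_f; apply: mem_cell_seq. Qed.

Definition cell_at (i j : nat) : cell 4 4 := (inZp i, inZp j).

(* Rows top to bottom, columns left to right; # marks a 1-edge and
   a, b the two halves of each 2-edge:
     a b # .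
     . # # b
     # . # a
     # # . #                                                            *)
Definition one_edges_seq : seq (cell 4 4) :=
  [:: cell_at 0 2; cell_at 1 1; cell_at 1 2; cell_at 2 0;
      cell_at 2 2; cell_at 3 0; cell_at 3 1; cell_at 3 3].

Definition two_edges_seq : seq (tedge 4 4) :=
  [:: (cell_at 2 3, cell_at 0 0); (cell_at 1 3, cell_at 0 1)].

Definition one_edges : {set cell 4 4} := [set:: one_edges_seq].
Definition two_edges : {set tedge 4 4} := [set:: two_edges_seq].

Lemma admissible_witness : admissible one_edges two_edges.
Proof.
rewrite /admissible /simple_config /two_edges_ok /has_gen_C4.
rewrite /cycle1 /cycle2 /cycle3 /occupied /FiniteQuant.quant0b.
rewrite /one_edges /two_edges !mem_set_seq.
rewrite (pred0b_seqE (@mem_ord_seq 3)) (pred0b_seqE (@mem_cell_seq 3 3)).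
rewrite (pred0b_seqE (@mem_tedge_seq 3 3)).
(* Call-by-value evaluation would compute the body [F] of every bounded
   quantifier [e \in E2 ==> F] for all 256 candidates [e]. *)
by lazy.
Qed.

Lemma card_witness : #|one_edges| + #|two_edges| = 10.
Proof.
rewrite !cardsE.
have/card_uniqP -> : uniq one_edges_seq by [].
by have/card_uniqP -> : uniq two_edges_seq by [].
Qed.

Theorem theorem3p1 : 10 <= z2 4 4.
Proof. by rewrite -card_witness; exact: leq_z2 admissible_witness. Qed.
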